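(* Let $A$ be an infinite discrete abelian group of uniform torsion, i.e. $dA=0$ for some integer $d\ge1$. Then $\mathcal{S}(\mathbf{R}\times A)$ is not path-connected.
   Context: $\mathcal{S}(G)$ denotes the space of closed subgroups of the locally compact group $G$ with the Chabauty topology (basic open sets $\{F: F\cap K=\emptyset,\ F\cap U_i\ne\emptyset\ \forall i\}$, $K$ compact, $U_i$ open). *)

From HB Require Import structures.
From mathcomp Require Import all_boot all_algebra.
From Stdlib Require Import Reals.
From Stdlib Require List.

Set Implicit Arguments.
Unset Strict Implicit.
Unset Printing Implicit Defensive.

Local Open Scope R_scope.

Section ChabautyDefs.
Variable A : zmodType.

Definition G : Type := (R * A)%type.

Definition gzero : G := (0, GRing.zero).
Definition gadd (g h : G) : G := (fst g + fst h, GRing.add (snd g) (snd h)).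
Definition gopp (g : G) : G := (- fst g, GRing.opp (snd g)).

(* Product topology of the usual topology on R and the discrete one on A. *)
Definition G_open (U : G -> Prop) : Prop :=
  forall x a, U (x, a) ->
    exists eps, 0 < eps /\ forall y, Rabs (y - x) < eps -> U (y, a).

Definition G_closed (F : G -> Prop) : Prop := G_open (fun g => ~ F g).

Definition G_compact (K : G -> Prop) : Prop :=
  forall (I : Type) (O : I -> G -> Prop),
    (forall i, G_open (O i)) ->
    (forall g, K g -> exists i, O i g) ->
    exists l : list I, forall g, K g -> exists i, List.In i l /\ O i g.

(* Closed subgroups of G: the points of S(G). *)
Definition closed_subgroup (F : G -> Prop) : Prop :=
  [/\ F gzero,
      (forall g h, F g -> F h -> F (gadd g h)),
      (forall g, F g -> F (gopp g)) &
      G_closed F].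

Definition chabauty_basic (K : G -> Prop) (Us : list (G -> Prop))
    (F : G -> Prop) : Prop :=
  (forall g, K g -> ~ F g) /\
  List.Forall (fun U => exists g, U g /\ F g) Us.

Definition chabauty_continuous_on01 (gamma : R -> G -> Prop) : Prop :=
  forall t, 0 <= t <= 1 ->
  forall (K : G -> Prop) (Us : list (G -> Prop)),
    G_compact K -> List.Forall G_open Us ->
    chabauty_basic K Us (gamma t) ->
    exists delta, 0 < delta /\
      forall s, 0 <= s <= 1 -> Rabs (s - t) < delta ->
        chabauty_basic K Us (gamma s).

Definition chabauty_path (F0 F1 : G -> Prop) : Prop :=
  exists gamma : R -> G -> Prop,
    (forall t, 0 <= t <= 1 -> closed_subgroup (gamma t)) /\
    (forall g, gamma 0 g <-> F0 g) /\
    (forall g, gamma 1 g <-> F1 g) /\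
    chabauty_continuous_on01 gamma.

Definition chabauty_path_connected : Prop :=
  forall F0 F1 : G -> Prop,
    closed_subgroup F0 -> closed_subgroup F1 -> chabauty_path F0 F1.

End ChabautyDefs.

Definition infinite_group (A : zmodType) : Prop :=
  forall s : seq A, exists a : A, a \notin s.

Definition uniform_torsion (A : zmodType) : Prop :=
  exists d : nat, leq 1 d /\ forall a : A, GRing.natmul a d = GRing.zero.

From mathcomp Require Import all_boot all_algebra.
From Stdlib Require Import Reals Lra Lia ZArith Classical.
From Coquelicot Require Import Rcomplements.

Set Implicit Arguments.
Unset Strict Implicit.
Unset Printing Implicit Defensive.

Local Open Scope R_scope.

(* Along a path t |-> H_t in S(R x A), the property "the projection of H_t
   to A is finite" is locally constant, hence constant; it holds for R x {0}
   and fails for R x A.  If H_t contains some (c, 0) with 0 < c < 1, so does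
   every nearby H_s, which is then determined by its part in [0,1) x A; hence
   the set of nonempty fibres over A is locally constant.  Otherwise H_t
   avoids the compact set [1/4,1/2] x {0}, and so do the nearby H_s.  Such an
   H has no nonzero point of modulus <= 1/2 on R x {0}, and since dA = 0 it
   meets [-r,r] x A only in {0} x A, for r = 1/(2d).  This makes
   H_s n ({0} x A) locally constant, and a subgroup that is r-discrete in the
   R-direction has finite projection iff H n ({0} x A) is finite. *)

Lemma interval_locally_constant (a b : R) (P : R -> Prop) : a <= b ->
  (forall u, a <= u <= b -> exists del, 0 < del /\
     forall s, a <= s <= b -> Rabs (s - u) < del -> (P s <-> P u)) ->
  (P a <-> P b).
Proof.
intros Hab Hloc.
set (E := fun x => a <= x <= b /\ forall y, a <= y <= x -> (P y <-> P a)).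
assert (HEa : E a) by (split; [lra | intros y Hy; replace y with a by lra; tauto]).
assert (HEb : bound E) by (exists b; intros x [Hx _]; lra).
destruct (completeness E HEb (ex_intro _ a HEa)) as [m [Hub Hlub]].
assert (Hm : a <= m <= b) by (split; [exact (Hub a HEa) | apply Hlub; intros x [Hx _]; lra]).
destruct (Hloc m Hm) as [del [Hdel Hmdel]].
assert (Hx : exists x, E x /\ m - del < x).
{ apply not_all_not_ex; intro Hn.
  enough (m <= m - del) by lra.
  apply Hlub; intros x Ex.
  apply Rnot_lt_le; intro Hlt; exact (Hn x (conj Ex Hlt)). }
destruct Hx as [x [[Hx HEx] Hmx]].
assert (Hxm : x <= m) by (apply Hub; split; assumption).
set (m' := Rmin b (m + del / 2)).
assert (Hm' : a <= m' /\ m' <= b /\ m' <= m + del / 2).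
{ split; [apply Rmin_glb; lra | split; [apply Rmin_l | apply Rmin_r]]. }
assert (HEm' : E m').
{ split; [lra |].
  intros y Hy. destruct (Rle_lt_dec y x) as [Hyx | Hxy]; [apply HEx; lra |].
  assert (HPx : P x <-> P a) by (apply HEx; lra).
  rewrite -HPx.
  transitivity (P m); [| symmetry]; apply Hmdel; try lra; apply Rabs_lt_between'; lra. }
assert (Hm'm : m' <= m) by exact (Hub m' HEm').
assert (Hm'e : m' = b)
  by (unfold m', Rmin in *; destruct (Rle_dec b (m + del / 2)); lra).
rewrite Hm'e in HEm'. symmetry; apply HEm'; lra.
Qed.

Lemma Zmul_floor (x l : R) : 0 < l -> exists k : Z, IZR k * l <= x < IZR k * l + l.
Proof.
intros Hl. destruct (base_Int_part (x / l)) as [Hk1 Hk2].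
exists (Int_part (x / l)).
set (q := x / l) in *.
assert (Hx : x = q * l) by (unfold q; field; lra).
rewrite Hx. split; nra.
Qed.

(** * Local constancy on the unit interval *)

Definition on_ball01 (t del : R) (P : R -> Prop) : Prop :=
  forall s, 0 <= s <= 1 -> Rabs (s - t) < del -> P s.

Definition near01 (t : R) (P : R -> Prop) : Prop :=
  exists del, 0 < del /\ on_ball01 t del P.

Definition locally_constant_at (P : R -> Prop) (t : R) : Prop :=
  near01 t (fun s => P s <-> P t).

Lemma near01_and t (P Q : R -> Prop) :
  near01 t P -> near01 t Q -> near01 t (fun s => P s /\ Q s).
Proof.
intros [d1 [Hd1 HP]] [d2 [Hd2 HQ]].
exists (Rmin d1 d2); split; [apply Rmin_pos; assumption |].
intros s Hs Hst. split.
- apply HP; [exact Hs | pose proof (Rmin_l d1 d2); lra].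
- apply HQ; [exact Hs | pose proof (Rmin_r d1 d2); lra].
Qed.

Lemma locally_constant_on_ball (P : R -> Prop) t del : 0 <= t <= 1 ->
  on_ball01 t del (locally_constant_at P) -> on_ball01 t del (fun s => P s <-> P t).
Proof.
intros Ht Hloc s Hs Hst.
assert (Hdel : 0 < del) by (pose proof (Rabs_pos (s - t)); lra).
assert (Hseg : forall a b, a <= b -> 0 <= a -> b <= 1 ->
          Rabs (a - t) < del -> Rabs (b - t) < del -> (P a <-> P b)).
{ intros a b Hab Ha Hb Hat Hbt. apply interval_locally_constant; [exact Hab |].
  apply Rabs_lt_between' in Hat, Hbt.
  intros u Hu.
  destruct (Hloc u ltac:(lra) ltac:(apply Rabs_lt_between'; lra)) as [e [He Hue]].
  exists e; split; [exact He |]. intros v Hv. apply Hue; lra. }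
assert (Htt : Rabs (t - t) < del) by (rewrite Rminus_eq_0 Rabs_R0; exact Hdel).
destruct (Rle_lt_dec s t).
- apply Hseg; lra.
- symmetry; apply Hseg; lra.
Qed.

(** * Finite subsets *)

Definition is_finite (A : eqType) (P : A -> Prop) : Prop :=
  exists s : seq A, forall b, P b -> b \in s.

Section FiniteSubsets.
Variable A : eqType.

Lemma is_finite_sub (P Q : A -> Prop) :
  (forall b, P b -> Q b) -> is_finite Q -> is_finite P.
Proof. intros HPQ [s Hs]. exists s. intros b Hb. exact (Hs b (HPQ b Hb)). Qed.

Lemma is_finite_iff (P Q : A -> Prop) :
  (forall b, P b <-> Q b) -> (is_finite P <-> is_finite Q).
Proof. intros HPQ. split; apply is_finite_sub; intros b; apply HPQ. Qed.

Lemma is_finite_or (P Q : A -> Prop) :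
  is_finite P -> is_finite Q -> is_finite (fun b => P b \/ Q b).
Proof.
intros [s Hs] [s' Hs']. exists (s ++ s'). intros b [Hb | Hb]; rewrite mem_cat; apply/orP.
- left; exact (Hs b Hb).
- right; exact (Hs' b Hb).
Qed.

End FiniteSubsets.

Lemma is_finite_translate (A : zmodType) (P : A -> Prop) (c : A) :
  is_finite P -> is_finite (fun b => P (GRing.add b (GRing.opp c))).
Proof.
intros [s Hs]. exists (map (GRing.add^~ c) s). intros b Hb.
rewrite -(GRing.subrK c b). exact (map_f _ (Hs _ Hb)).
Qed.

(** * Closed subgroups of R x A *)

Definition Aproj (A : zmodType) (H : G A -> Prop) (b : A) : Prop := exists x, H (x, b).

Definition axis_gap (A : zmodType) (r : R) (H : G A -> Prop) : Prop :=
  forall z, H (z, GRing.zero) -> Rabs z <= r -> z = 0.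

Definition fiber_gap (A : zmodType) (r : R) (H : G A -> Prop) : Prop :=
  forall x b, H (x, b) -> Rabs x <= r -> x = 0.

Definition segment (A : zmodType) (a b : R) (c : A) (g : G A) : Prop :=
  a <= fst g <= b /\ snd g = c.

Definition open_segment (A : zmodType) (a b : R) (c : A) (g : G A) : Prop :=
  a < fst g < b /\ snd g = c.

Definition avoids (A : zmodType) (K F : G A -> Prop) : Prop := forall g, K g -> ~ F g.

Definition meets (A : zmodType) (U F : G A -> Prop) : Prop := exists g, U g /\ F g.

Section ClosedSubgroup.
Variables (A : zmodType) (H : G A -> Prop).
Hypothesis H_sub : closed_subgroup H.

Lemma closed_subgroup_opp x b : H (x, b) -> H (- x, GRing.opp b).
Proof. destruct H_sub as [_ _ Hopp _]. exact (Hopp (x, b)). Qed.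

Lemma closed_subgroup_sub x b y c :
  H (x, b) -> H (y, c) -> H (x - y, GRing.add b (GRing.opp c)).
Proof.
destruct H_sub as [_ Hadd _ _]. intros Hx Hy.
exact (Hadd (x, b) (- y, GRing.opp c) Hx (closed_subgroup_opp Hy)).
Qed.

Lemma closed_subgroup_natmul n x b : H (x, b) -> H (INR n * x, GRing.natmul b n).
Proof.
destruct H_sub as [H0 Hadd _ _]. intros Hx. induction n as [| n IH].
- rewrite Rmult_0_l GRing.mulr0n. exact H0.
- rewrite S_INR GRing.mulrSr Rmult_plus_distr_r Rmult_1_l.
  exact (Hadd _ (x, b) IH Hx).
Qed.

Lemma closed_subgroup_Zmul (k : Z) l : H (l, GRing.zero) -> H (IZR k * l, GRing.zero).
Proof.
intros Hl.
assert (Hnat : forall n, H (INR n * l, GRing.zero))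
  by (intro n; pose proof (closed_subgroup_natmul n Hl) as Hn;
      rewrite GRing.mul0rn in Hn; exact Hn).
destruct (Z_le_gt_dec 0 k) as [Hk | Hk].
- rewrite -(Z2Nat.id k Hk) -INR_IZR_INZ. exact (Hnat _).
- assert (Hk' : (0 <= - k)%Z) by lia.
  replace (IZR k) with (- INR (Z.to_nat (- k)))
    by (rewrite INR_IZR_INZ (Z2Nat.id _ Hk') opp_IZR; ring).
  rewrite Ropp_mult_distr_l_reverse -GRing.oppr0.
  exact (closed_subgroup_opp (Hnat _)).
Qed.

Lemma closed_subgroup_reduce l x b : 0 < l -> H (l, GRing.zero) -> H (x, b) ->
  exists y, 0 <= y < l /\ H (y, b).
Proof.
intros Hl Hper Hx. destruct (Zmul_floor x Hl) as [k Hk].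
exists (x - IZR k * l). split; [lra |].
rewrite -(GRing.subr0 b). exact (closed_subgroup_sub Hx (closed_subgroup_Zmul k Hper)).
Qed.

Lemma closed_subgroup_axis_abs z : H (z, GRing.zero) -> H (Rabs z, GRing.zero).
Proof.
intros Hz. unfold Rabs. destruct (Rcase_abs z); [| exact Hz].
rewrite -GRing.oppr0. exact (closed_subgroup_opp Hz).
Qed.

Lemma axis_gap_of_avoids eta : 0 < eta ->
  avoids (segment eta (2 * eta) GRing.zero) H -> axis_gap (2 * eta) H.
Proof.
intros Heta Hav z Hz Hzr.
destruct (Req_dec z 0) as [| Hz0]; [assumption | exfalso].
pose proof (closed_subgroup_axis_abs Hz) as Hw.
pose proof (Rabs_pos_lt _ Hz0) as Hw0.
destruct (Rle_lt_dec eta (Rabs z)) as [Hew | Hwe].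
- exact (Hav (Rabs z, GRing.zero) (conj (conj Hew Hzr) erefl) Hw).
- (* the first multiple of |z| beyond eta still lies below 2 eta *)
  destruct (Zmul_floor eta Hw0) as [k Hk].
  apply (Hav (IZR (k + 1) * Rabs z, GRing.zero)); [| exact (closed_subgroup_Zmul _ Hw)].
  split; [simpl; rewrite plus_IZR; lra | reflexivity].
Qed.

Lemma slab_finite r a : fiber_gap r H -> is_finite (fun b => H (0, b)) ->
  is_finite (fun b => exists y, a <= y < a + r /\ H (y, b)).
Proof.
intros Hgap Hfin.
destruct (classic (exists y0 b0, a <= y0 < a + r /\ H (y0, b0)))
  as [[y0 [b0 [Hy0 Hyb0]]] | Hno].
- apply (is_finite_sub (Q := fun b => H (0, GRing.add b (GRing.opp b0)))).
  + intros b [y [Hy Hyb]].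
    pose proof (closed_subgroup_sub Hyb Hyb0) as Hdiff.
    assert (Hyy0 : y - y0 = 0) by (apply (Hgap _ _ Hdiff); apply Rabs_le_between; lra).
    rewrite Hyy0 in Hdiff. exact Hdiff.
  + exact (is_finite_translate b0 Hfin).
- exists [::]. intros b [y Hy]. exfalso. exact (Hno (ex_intro _ y (ex_intro _ b Hy))).
Qed.

Lemma strip_finite r N : fiber_gap r H -> is_finite (fun b => H (0, b)) ->
  is_finite (fun b => exists y, 0 <= y < INR N * r /\ H (y, b)).
Proof.
intros Hgap Hfin. induction N as [| N IH].
- exists [::]. intros b [y [Hy _]]. simpl in Hy. lra.
- apply (is_finite_sub
    (Q := fun b => (exists y, 0 <= y < INR N * r /\ H (y, b)) \/
                   (exists y, INR N * r <= y < INR N * r + r /\ H (y, b)))).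
  + intros b [y [Hy Hyb]]. rewrite S_INR in Hy.
    destruct (Rlt_le_dec y (INR N * r)); [left | right]; exists y; split; auto; lra.
  + exact (is_finite_or IH (slab_finite _ Hgap Hfin)).
Qed.

End ClosedSubgroup.

Section Torsion.
Variables (A : zmodType) (d : nat).
Hypothesis d_gt0 : leq 1 d.
Hypothesis dA : forall a : A, GRing.natmul a d = GRing.zero.
Variable H : G A -> Prop.
Hypothesis H_sub : closed_subgroup H.

Lemma INR_d_gt0 : 0 < INR d.
Proof. apply lt_0_INR. exact (ltP d_gt0). Qed.

Lemma closed_subgroup_torsion_axis x b : H (x, b) -> H (INR d * x, GRing.zero).
Proof. intros Hx. rewrite -(dA b). exact (closed_subgroup_natmul H_sub d Hx). Qed.

Lemma fiber_gap_of_axis_gap r : axis_gap r H -> fiber_gap (r / INR d) H.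
Proof.
intros Hgap x b Hx Hxr. pose proof INR_d_gt0 as Hd.
assert (Hdx : INR d * x = 0).
{ apply (Hgap _ (closed_subgroup_torsion_axis Hx)).
  rewrite Rabs_mult (Rabs_pos_eq (INR d)); last lra.
  replace r with (INR d * (r / INR d)) by (field; lra).
  apply Rmult_le_compat_l; lra. }
destruct (Rmult_integral _ _ Hdx); lra.
Qed.

Lemma fiber_gap_of_avoids eta : 0 < eta ->
  avoids (segment eta (2 * eta) GRing.zero) H -> fiber_gap (2 * eta / INR d) H.
Proof. intros Heta HV. exact (fiber_gap_of_axis_gap (axis_gap_of_avoids H_sub Heta HV)). Qed.

Lemma Aproj_finite_of_fiber_gap r : 0 < r -> fiber_gap r H ->
  is_finite (fun b => H (0, b)) -> is_finite (Aproj H).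
Proof.
intros Hr Hgap Hfin.
destruct (classic (exists l, 0 < l /\ H (l, GRing.zero))) as [[l [Hl Hper]] | Hno].
- destruct (INR_unbounded (l / r)) as [N HN].
  apply (is_finite_sub (Q := fun b => exists y, 0 <= y < INR N * r /\ H (y, b)));
    [| exact (strip_finite H_sub N Hgap Hfin)].
  intros b [x Hx]. destruct (closed_subgroup_reduce H_sub Hl Hper Hx) as [y [Hy Hyb]].
  exists y; split; [| exact Hyb].
  assert (l < INR N * r) by (apply (Rmult_lt_compat_r r) in HN; [field_simplify in HN; lra | lra]).
  lra.
- (* without a positive period, H n (R x {0}) is trivial and dA = 0 kills the R-part *)
  apply (is_finite_sub (Q := fun b => H (0, b))); [| exact Hfin].
  intros b [x Hx]. pose proof (closed_subgroup_torsion_axis Hx) as Hdx.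
  assert (Hdx0 : INR d * x = 0).
  { destruct (Req_dec (INR d * x) 0) as [| Hne]; [assumption | exfalso].
    apply Hno. exists (Rabs (INR d * x)).
    split; [exact (Rabs_pos_lt _ Hne) | exact (closed_subgroup_axis_abs H_sub Hdx)]. }
  pose proof INR_d_gt0.
  destruct (Rmult_integral _ _ Hdx0) as [| Hx0]; [lra |]. rewrite Hx0 in Hx. exact Hx.
Qed.

Lemma Aproj_finite_iff r : 0 < r -> fiber_gap r H ->
  (is_finite (Aproj H) <-> is_finite (fun b => H (0, b))).
Proof.
intros Hr Hgap. split.
- apply is_finite_sub. intros b Hb. exists 0. exact Hb.
- exact (Aproj_finite_of_fiber_gap Hr Hgap).
Qed.

Lemma Aproj_finite_iff_of_avoids eta : 0 < eta ->
  avoids (segment eta (2 * eta) GRing.zero) H ->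
  (is_finite (Aproj H) <-> is_finite (fun b => H (0, b))).
Proof.
intros Heta HV. pose proof INR_d_gt0.
apply (Aproj_finite_iff (r := 2 * eta / INR d)); [apply Rdiv_lt_0_compat; lra |].
exact (fiber_gap_of_avoids Heta HV).
Qed.

End Torsion.

(** * Open and compact sets *)

Lemma open_segment_open (A : zmodType) (a b : R) (c : A) : G_open (open_segment a b c).
Proof.
intros x c' [Hx Hc]. simpl in Hx, Hc.
exists (Rmin (x - a) (b - x)). split; [apply Rmin_pos; lra |].
intros y Hy. apply Rabs_lt_between' in Hy.
pose proof (Rmin_l (x - a) (b - x)). pose proof (Rmin_r (x - a) (b - x)).
split; simpl; [lra | exact Hc].
Qed.
Arguments open_segment_open {A} a b c.

Lemma segment_compact (A : zmodType) (a b : R) (c : A) : G_compact (segment a b c).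
Proof.
intros I O Hop Hcov.
destruct (Rle_lt_dec a b) as [Hab | Hba]; [| exists nil; intros g [Hg _]; lra].
set (P := fun x => exists l : list I,
            forall y, a <= y <= x -> exists i, List.In i l /\ O i (y, c)).
assert (HPa : P a).
{ destruct (Hcov (a, c)) as [i Hi]; [split; simpl; [lra | reflexivity] |].
  exists (i :: nil). intros y Hy. replace y with a by lra.
  exists i. split; [left; reflexivity | exact Hi]. }
assert (HPb : P b).
{ apply (interval_locally_constant Hab (P := P)); [| exact HPa].
  intros u Hu.
  destruct (Hcov (u, c)) as [i Hi]; [split; simpl; [lra | reflexivity] |].
  destruct (Hop i u c Hi) as [eps [Heps Hball]].
  (* one more open set of the cover carries a finite subcover across (u - eps, u + eps) *)
  assert (Hstep : forall v w, Rabs (v - u) < eps -> Rabs (w - u) < eps -> P v -> P w).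
  { intros v w Hv Hw [l Hl]. apply Rabs_lt_between' in Hv, Hw.
    exists (i :: l). intros y Hy. destruct (Rle_lt_dec y v).
    - destruct (Hl y) as [j [Hj Hjy]]; [lra |]. exists j. split; [right; exact Hj | exact Hjy].
    - exists i. split; [left; reflexivity |]. apply Hball. apply Rabs_lt_between'; lra. }
  assert (Huu : Rabs (u - u) < eps) by (rewrite Rminus_eq_0 Rabs_R0; exact Heps).
  exists eps. split; [exact Heps |]. intros s _ Hsu. split; apply Hstep; assumption. }
destruct HPb as [l Hl]. exists l. intros [y c'] [Hy Hc]. simpl in Hy, Hc. subst c'.
exact (Hl y Hy).
Qed.
Arguments segment_compact {A} a b c.

(** * Paths in the Chabauty space *)

Section ChabautyPath.
Variables (A : zmodType) (gam : R -> G A -> Prop).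
Hypothesis gam_sub : forall t, 0 <= t <= 1 -> closed_subgroup (gam t).
Hypothesis gam_cont : chabauty_continuous_on01 gam.

Lemma near01_avoids t K : 0 <= t <= 1 -> G_compact K -> avoids K (gam t) ->
  near01 t (fun s => avoids K (gam s)).
Proof.
intros Ht HK Hav.
destruct (gam_cont Ht (Us := [::]) HK (List.Forall_nil _) (conj Hav (List.Forall_nil _)))
  as [del [Hdel Hball]].
exists del. split; [exact Hdel |]. intros s Hs Hst. exact (proj1 (Hball s Hs Hst)).
Qed.

Lemma near01_meets t U : 0 <= t <= 1 -> G_open U -> meets U (gam t) ->
  near01 t (fun s => meets U (gam s)).
Proof.
intros Ht HU Hm.
assert (Hempty : G_compact (fun _ : G A => False)) by (intros I O _ _; exists nil; intros g []).
assert (Hbasic : chabauty_basic (fun _ => False) [:: U] (gam t))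
  by (split; [intros g [] | constructor; [exact Hm | constructor]]).
destruct (gam_cont Ht Hempty (List.Forall_cons _ HU (List.Forall_nil _)) Hbasic)
  as [del [Hdel Hball]].
exists del. split; [exact Hdel |]. intros s Hs Hst.
destruct (Hball s Hs Hst) as [_ HF]. inversion HF. assumption.
Qed.

Lemma Aproj_locally_constant_small_period u b : 0 <= u <= 1 ->
  meets (open_segment 0 1 GRing.zero) (gam u) ->
  locally_constant_at (fun s => Aproj (gam s) b) u.
Proof.
intros Hu HW.
destruct (classic (Aproj (gam u) b)) as [[x Hx] | Hn].
- destruct HW as [[c a] [[Hc Ha] Hcu]]. simpl in Hc, Ha. subst a.
  destruct (closed_subgroup_reduce (gam_sub Hu) (proj1 Hc) Hcu Hx) as [y [Hy Hyb]].
  assert (Hm : meets (open_segment (-1) 1 b) (gam u))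
    by (exists (y, b); split; [split; simpl; [lra | reflexivity] | exact Hyb]).
  destruct (near01_meets Hu (open_segment_open _ _ _) Hm) as [del [Hdel Hball]].
  exists del. split; [exact Hdel |]. intros s Hs Hsu.
  split; intros _; [exists x; exact Hx |].
  destruct (Hball s Hs Hsu) as [[x' a] [[_ Ha] Hg]]. simpl in Ha. subst a.
  exists x'. exact Hg.
- assert (HK : avoids (segment (-1) 1 b) (gam u)).
  { intros [x a] [_ Ha] Hg. simpl in Ha. subst a. apply Hn. exists x. exact Hg. }
  destruct (near01_and (near01_avoids Hu (segment_compact _ _ _) HK)
                       (near01_meets Hu (open_segment_open _ _ _) HW)) as [del [Hdel Hball]].
  exists del. split; [exact Hdel |]. intros s Hs Hsu.
  split; [| intros Hb; contradiction].
  intros [x Hx]. exfalso.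
  destruct (Hball s Hs Hsu) as [HKs [[c a] [[Hc Ha] Hcs]]]. simpl in Hc, Ha. subst a.
  destruct (closed_subgroup_reduce (gam_sub Hs) (proj1 Hc) Hcs Hx) as [y [Hy Hyb]].
  apply (HKs (y, b)); [split; simpl; [lra | reflexivity] | exact Hyb].
Qed.

Variable d : nat.
Hypothesis d_gt0 : leq 1 d.
Hypothesis dA : forall a : A, GRing.natmul a d = GRing.zero.

Lemma axis_fiber_locally_constant eta u b : 0 < eta -> 0 <= u <= 1 ->
  avoids (segment eta (2 * eta) GRing.zero) (gam u) ->
  locally_constant_at (fun s => gam s (0, b)) u.
Proof.
intros Heta Hu HV.
set (r := 2 * eta / INR d).
assert (Hr : 0 < r) by (pose proof (INR_d_gt0 d_gt0); unfold r; apply Rdiv_lt_0_compat; lra).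
assert (Hgap : forall s, 0 <= s <= 1 -> avoids (segment eta (2 * eta) GRing.zero) (gam s) ->
                fiber_gap r (gam s))
  by (intros s Hs HVs; exact (fiber_gap_of_avoids d_gt0 dA (gam_sub Hs) Heta HVs)).
destruct (classic (gam u (0, b))) as [Hb | Hn].
- assert (Hm : meets (open_segment (- r) r b) (gam u))
    by (exists (0, b); split; [split; simpl; [lra | reflexivity] | exact Hb]).
  destruct (near01_and (near01_avoids Hu (segment_compact _ _ _) HV)
                       (near01_meets Hu (open_segment_open _ _ _) Hm)) as [del [Hdel Hball]].
  exists del. split; [exact Hdel |]. intros s Hs Hsu.
  split; intros _; [exact Hb |].
  destruct (Hball s Hs Hsu) as [HVs [[x a] [[Hx Ha] Hg]]]. simpl in Hx, Ha. subst a.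
  assert (Hx0 : x = 0) by (apply (Hgap s Hs HVs x b Hg); apply Rabs_le_between; lra).
  rewrite Hx0 in Hg. exact Hg.
- assert (HK : avoids (segment (- r) r b) (gam u)).
  { intros [x a] [Hx Ha] Hg. simpl in Hx, Ha. subst a.
    assert (Hx0 : x = 0) by (apply (Hgap u Hu HV x b Hg); apply Rabs_le_between; lra).
    rewrite Hx0 in Hg. exact (Hn Hg). }
  destruct (near01_avoids Hu (segment_compact _ _ _) HK) as [del [Hdel Hball]].
  exists del. split; [exact Hdel |]. intros s Hs Hsu.
  split; [| intros Hb; contradiction].
  intros Hb. exfalso. apply (Hball s Hs Hsu (0, b)); [split; simpl; [lra | reflexivity] | exact Hb].
Qed.

Lemma Aproj_finite_locally_constant_small_period t : 0 <= t <= 1 ->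
  meets (open_segment 0 1 GRing.zero) (gam t) ->
  locally_constant_at (fun s => is_finite (Aproj (gam s))) t.
Proof.
intros Ht HW.
destruct (near01_meets Ht (open_segment_open _ _ _) HW) as [del [Hdel Hball]].
assert (Heq : forall b, on_ball01 t del (fun s => Aproj (gam s) b <-> Aproj (gam t) b)).
{ intros b. apply locally_constant_on_ball; [exact Ht |].
  intros u Hu Hut. exact (Aproj_locally_constant_small_period b Hu (Hball u Hu Hut)). }
exists del. split; [exact Hdel |]. intros s Hs Hst.
apply is_finite_iff. intros b. exact (Heq b s Hs Hst).
Qed.

Lemma Aproj_finite_locally_constant_avoids eta t : 0 < eta -> 0 <= t <= 1 ->
  avoids (segment eta (2 * eta) GRing.zero) (gam t) ->
  locally_constant_at (fun s => is_finite (Aproj (gam s))) t.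
Proof.
intros Heta Ht HV.
destruct (near01_avoids Ht (segment_compact _ _ _) HV) as [del [Hdel Hball]].
assert (Heq : forall b, on_ball01 t del (fun s => gam s (0, b) <-> gam t (0, b))).
{ intros b. apply locally_constant_on_ball; [exact Ht |].
  intros u Hu Hut. exact (axis_fiber_locally_constant b Heta Hu (Hball u Hu Hut)). }
exists del. split; [exact Hdel |]. intros s Hs Hst.
rewrite (Aproj_finite_iff_of_avoids d_gt0 dA (gam_sub Hs) Heta (Hball s Hs Hst))
        (Aproj_finite_iff_of_avoids d_gt0 dA (gam_sub Ht) Heta HV).
apply is_finite_iff. intros b. exact (Heq b s Hs Hst).
Qed.

Lemma Aproj_finite_locally_constant t : 0 <= t <= 1 ->
  locally_constant_at (fun s => is_finite (Aproj (gam s))) t.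
Proof.
intros Ht.
destruct (classic (meets (open_segment 0 1 GRing.zero) (gam t))) as [HW | HW].
- exact (Aproj_finite_locally_constant_small_period Ht HW).
- apply (@Aproj_finite_locally_constant_avoids (/ 4)); [lra | exact Ht |].
  intros [x a] [Hx Ha] Hg. simpl in Hx, Ha. subst a.
  apply HW. exists (x, GRing.zero). split; [split; simpl; [lra | reflexivity] | exact Hg].
Qed.

End ChabautyPath.

Lemma axis_closed_subgroup (A : zmodType) :
  closed_subgroup (fun g : G A => snd g = GRing.zero).
Proof.
split.
- reflexivity.
- intros g h Hg Hh. simpl. rewrite Hg Hh GRing.addr0. reflexivity.
- intros g Hg. simpl. rewrite Hg GRing.oppr0. reflexivity.
- intros x a Ha. exists 1. split; [lra | intros y _; exact Ha].
Qed.

Lemma full_closed_subgroup (A : zmodType) : closed_subgroup (fun _ : G A => True).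
Proof. split; try (intros; exact I). intros x a Ha. exfalso. exact (Ha I). Qed.

Theorem proposition7p6 (A : zmodType) :
  infinite_group A -> uniform_torsion A -> ~ chabauty_path_connected A.
Proof.
intros Hinf [d [Hd dA]] Hpc.
destruct (Hpc _ _ (axis_closed_subgroup A) (full_closed_subgroup A))
  as [gam [Hsub [Hgam0 [Hgam1 Hcont]]]].
assert (Hends : is_finite (Aproj (gam 0)) <-> is_finite (Aproj (gam 1))).
{ apply (interval_locally_constant (P := fun s => is_finite (Aproj (gam s)))); [lra |].
  intros u Hu. exact (Aproj_finite_locally_constant Hsub Hcont Hd dA Hu). }
assert (Hfin0 : is_finite (Aproj (gam 0))).
{ exists [:: GRing.zero]. intros b [x Hx]. apply Hgam0 in Hx. simpl in Hx.
  rewrite Hx mem_seq1. by apply/eqP. }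
destruct (proj1 Hends Hfin0) as [s Hs].
destruct (Hinf s) as [a Ha].
assert (Hin : a \in s) by (apply Hs; exists 0; apply Hgam1; exact I).
rewrite Hin in Ha. discriminate.
Qed.
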